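(* Let $e=(e_0,\dots,e_n)$ be a system of weights, $n\ge1$. Let $\mathbb P^{2n+1}(e,e)=\operatorname{Proj}k[T_0,\dots,T_n,T'_0,\dots,T'_n]$ with $\deg T_i=\deg T'_i=e_i$, let $L_1=V_+(T_0,\dots,T_n)$, $L_2=V_+(T'_0,\dots,T'_n)$, and $U_n(e)=\mathbb P^{2n+1}(e,e)\setminus(L_1\cup L_2)$. Then the morphism $$\pi_n(e)\colon U_n(e)\to\mathbb P^n(e)\times\mathbb P^n(e),\quad [t_0,\dots,t_n,t'_0,\dots,t'_n]\mapsto([t_0,\dots,t_n],[t'_0,\dots,t'_n])$$ is open.
   Context: A system of weights is a tuple of positive integers; the weighted projective space $\mathbb P^n(e)=\operatorname{Proj}(k[T_0,\dots,T_n])$ with $\deg T_i=e_i$, over an algebraically closed field $k$; its points are classes $[a_0,\dots,a_n]\neq0$ with $[a_i]\sim[t^{e_i}a_i]$, $t\in k^*$. *)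

From HB Require Import structures.
From mathcomp Require Import all_boot all_order all_algebra.
From mathcomp Require Import mpoly.
Set Implicit Arguments. Unset Strict Implicit. Unset Printing Implicit Defensive.
Import GRing.Theory.
Local Open Scope ring_scope.

(* A point of P^n(e) is the class of a nonzero vector a : 'I_(n.+1) -> k
   under a ~ (t^{e_i} a_i), t in k^*.  Subsets of P^n(e) are encoded as
   saturated predicates on representatives. *)

Section WP.
Variable k : closedFieldType.

Definition wdeg (N : nat) (w : 'I_N -> nat) (m : 'X_{1..N}) : nat :=
  (\sum_(i < N) w i * m i)%N.

Definition whomog (N : nat) (w : 'I_N -> nat) (d : nat) (p : {mpoly k[N]}) : bool :=
  all (fun m => wdeg w m == d) (msupp p).

Definition wequiv (N : nat) (w : 'I_N -> nat) (a b : 'I_N -> k) : Prop :=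
  exists2 t : k, t != 0 & forall i, b i = t ^+ w i * a i.

(* the doubled weight system (e,e) on the 2n+2 variables T_0..T_n,T'_0..T'_n *)
Definition ww (n : nat) (e : 'I_n.+1 -> nat) (i : 'I_(n.+1 + n.+1)) : nat :=
  match split i with inl j => e j | inr j => e j end.

Definition fstc (n : nat) (x : 'I_(n.+1 + n.+1) -> k) : 'I_n.+1 -> k :=
  fun j => x (lshift n.+1 j).
Definition sndc (n : nat) (x : 'I_(n.+1 + n.+1) -> k) : 'I_n.+1 -> k :=
  fun j => x (rshift n.+1 j).
Definition catc (n : nat) (a b : 'I_n.+1 -> k) : 'I_(n.+1 + n.+1) -> k :=
  fun i => match split i with inl j => a j | inr j => b j end.

(* bihomogeneous of bidegree (d1,d2) w.r.t. weights e on each block;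
   these define the closed subsets of P^n(e) x P^n(e) *)
Definition bihomog (n : nat) (e : 'I_n.+1 -> nat) (d1 d2 : nat)
  (q : {mpoly k[n.+1 + n.+1]}) : bool :=
  all (fun m : 'X_{1..n.+1 + n.+1} => ((\sum_(j < n.+1) e j * m (lshift n.+1 j)) == d1)%N
             && ((\sum_(j < n.+1) e j * m (rshift n.+1 j)) == d2)%N) (msupp q).

Definition zeroset (N : nat) (F : {mpoly k[N]} -> Prop) (x : 'I_N -> k) : Prop :=
  forall p, F p -> meval x p = 0.

(* U_n(e) = P^{2n+1}(e,e) \ (L_1 u L_2), on representatives *)
Definition nonzero (N : nat) (a : 'I_N -> k) : Prop := exists i, a i != 0.
Definition inU (n : nat) (x : 'I_(n.+1 + n.+1) -> k) : Prop :=
  nonzero (fstc x) /\ nonzero (sndc x).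

End WP.

From HB Require Import structures.
From mathcomp Require Import all_boot all_order all_algebra.
From mathcomp Require Import mpoly.
From Stdlib Require Import Classical.
From mathcomp Require Import ring.
Set Implicit Arguments. Unset Strict Implicit. Unset Printing Implicit Defensive.
Import GRing.Theory.
Local Open Scope ring_scope.

(* The torus k^* x k^* acts on U_n(e) by (t, s).(x, x') = (t.x, s.x'), and pi_n(e)
   is the quotient by this action.  Splitting a polynomial p into its bihomogeneous
   components p_(i,j), one has p((t, s).x) = sum t^i s^j p_(i,j)(x); hence the image
   of U_n(e) \ V_+(F) is the complement of the common zeros of all components of
   all p in F.  Conversely, if p_(d1,d2)(a, b) <> 0 with p homogeneous of degree d,
   then u |-> p((u, 1).(a, b)) is a polynomial whose coefficient of u^d1 is
   p_(d1,d2)(a, b), so it has a nonzero value at some u <> 0, k being infinite. *)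

Lemma big_bigraded (R : pzSemiRingType) (T : eqType) (r : seq T)
    (deg1 deg2 : T -> nat) (D : nat) :
  (forall m, m \in r -> (deg1 m < D)%N /\ (deg2 m < D)%N) ->
  forall (c : T -> R) (t s : R),
  \sum_(m <- r) t ^+ deg1 m * s ^+ deg2 m * c m =
  \sum_(i < D) \sum_(j < D) t ^+ i * s ^+ j *
      \sum_(m <- r | (deg1 m == i) && (deg2 m == j)) c m.
Proof.
move=> ltD c t s; rewrite pair_big /=.
under [RHS]eq_bigr do rewrite mulr_sumr big_mkcond /=.
rewrite exchange_big /= big_seq [RHS]big_seq; apply: eq_bigr => m /ltD[lt1 lt2].
rewrite -big_mkcond /= (big_pred1 (Ordinal lt1, Ordinal lt2)) // => -[i j] /=.
by rewrite xpair_eqE -!val_eqE /= ![_ == deg1 m]eq_sym ![_ == deg2 m]eq_sym.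
Qed.

(* Q * 'X - 1 has a root u, and any such root has u <> 0 and Q.[u] <> 0. *)
Lemma exists_nonroot_neq0 (K : closedFieldType) (Q : {poly K}) :
  Q != 0 -> exists2 u : K, u != 0 & Q.[u] != 0.
Proof.
move=> Q0.
have [u] : exists u, root (Q * 'X + (-1)%:P) u.
  by apply/closed_rootP; rewrite size_MXaddC (negbTE Q0) /= eqSS size_poly_eq0.
rewrite rootE hornerD hornerMX hornerC addr_eq0 opprK => /eqP Qu1.
by exists u; apply: contra_eq_neq Qu1 => ->; rewrite ?mulr0 ?mul0r eq_sym oner_eq0.
Qed.

Lemma split_lshift (m n : nat) (j : 'I_m) : split (lshift n j) = inl j.
Proof. exact: (unsplitK (inl j)). Qed.

Lemma split_rshift (m n : nat) (j : 'I_n) : split (rshift m j) = inr j.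
Proof. exact: (unsplitK (inr j)). Qed.

Section Bigraded.
Variables (k : closedFieldType) (n : nat) (e : 'I_n.+1 -> nat).
Local Notation N := (n.+1 + n.+1)%N.

Definition bdeg1 (m : 'X_{1..N}) : nat := \sum_(j < n.+1) e j * m (lshift n.+1 j).
Definition bdeg2 (m : 'X_{1..N}) : nat := \sum_(j < n.+1) e j * m (rshift n.+1 j).

Lemma wdeg_ww (m : 'X_{1..N}) : wdeg (ww e) m = (bdeg1 m + bdeg2 m)%N.
Proof.
rewrite /wdeg big_split_ord /ww.
by congr (_ + _)%N; apply: eq_bigr => j _; rewrite ?split_lshift ?split_rshift.
Qed.

Definition bscale (t s : k) (x : 'I_N -> k) : 'I_N -> k := fun i =>
  (match split i with inl j => t ^+ e j | inr j => s ^+ e j end) * x i.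

Lemma fstc_bscale t s x j : fstc (bscale t s x) j = t ^+ e j * fstc x j.
Proof. by rewrite /fstc /bscale split_lshift. Qed.

Lemma sndc_bscale t s x j : sndc (bscale t s x) j = s ^+ e j * sndc x j.
Proof. by rewrite /sndc /bscale split_rshift. Qed.

Lemma fstc_catc (a b : 'I_n.+1 -> k) j : fstc (catc a b) j = a j.
Proof. by rewrite /fstc /catc split_lshift. Qed.

Lemma sndc_catc (a b : 'I_n.+1 -> k) j : sndc (catc a b) j = b j.
Proof. by rewrite /sndc /catc split_rshift. Qed.

Lemma wequiv_bscale_catc x a b :
  wequiv e (fstc x) a -> wequiv e (sndc x) b ->
  exists t s, [/\ t != 0, s != 0 & x =1 bscale t s (catc a b)].
Proof.
move=> [t t0 ha] [s s0 hb]; exists t^-1, s^-1; split; rewrite ?invr_eq0 // => i.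
rewrite /bscale /catc; case: (split_ordP i) => j ->.
  by rewrite ha exprVn mulKf // expf_neq0.
by rewrite hb exprVn mulKf // expf_neq0.
Qed.

Definition monval (x : 'I_N -> k) (m : 'X_{1..N}) : k := \prod_(i < N) x i ^+ m i.

Lemma monval_bscale t s x m :
  monval (bscale t s x) m = t ^+ bdeg1 m * s ^+ bdeg2 m * monval x m.
Proof.
rewrite /monval /bscale !big_split_ord /=.
under eq_bigr do rewrite split_lshift exprMn -exprM.
under [in X in _ * X = _]eq_bigr do rewrite split_rshift exprMn -exprM.
rewrite !big_split /= -!prodrXr /bdeg1 /bdeg2.
by rewrite (mulrC (\prod_(i < n.+1) t ^+ _)); ring.
Qed.

Lemma meval_bscale t s x p : meval (bscale t s x) p =
  \sum_(m <- msupp p) t ^+ bdeg1 m * s ^+ bdeg2 m * (p@_m * monval x m).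
Proof.
rewrite mevalE; apply: eq_bigr => m _.
by rewrite -[\prod_i _]/(monval _ m) monval_bscale mulrCA.
Qed.

Definition bicomp (p : {mpoly k[N]}) (d1 d2 : nat) : {mpoly k[N]} :=
  \sum_(m <- msupp p | (bdeg1 m == d1) && (bdeg2 m == d2)) p@_m *: 'X_[m].

Lemma bicomp_bihomog p d1 d2 : bihomog e d1 d2 (bicomp p d1 d2).
Proof.
apply/allP => m; rewrite mcoeff_msupp; apply: contraR => hm.
rewrite /bicomp raddf_sum /=; apply/eqP; apply: big1 => m' /andP[/eqP h1 /eqP h2].
rewrite mcoeffZ mcoeffX; case: eqP => [Em|]; last by rewrite mulr0.
by move: hm; rewrite -Em -h1 -h2 !eqxx.
Qed.

Lemma meval_bicomp x p d1 d2 : meval x (bicomp p d1 d2) =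
  \sum_(m <- msupp p | (bdeg1 m == d1) && (bdeg2 m == d2)) p@_m * monval x m.
Proof.
by rewrite /bicomp raddf_sum /=; apply: eq_bigr => m _; rewrite mevalZ mevalX.
Qed.

Lemma bicomp_whomog_eq0 p d d1 d2 :
  whomog (ww e) d p -> (d1 + d2 != d)%N -> bicomp p d1 d2 = 0.
Proof.
move=> /allP hom d12; apply: big1_seq => m /andP[/andP[/eqP h1 /eqP h2] /hom].
by rewrite wdeg_ww h1 h2 (negbTE d12).
Qed.

Definition bdeg_bound (p : {mpoly k[N]}) : nat :=
  (\max_(m <- msupp p) (bdeg1 m + bdeg2 m)).+1.

Lemma bdeg_lt_bound p m :
  m \in msupp p -> (bdeg1 m < bdeg_bound p)%N /\ (bdeg2 m < bdeg_bound p)%N.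
Proof.
move=> /(@leq_bigmax_seq _ _ xpredT (fun m => bdeg1 m + bdeg2 m)) /(_ isT) le_max.
by rewrite /bdeg_bound !ltnS; split; apply: leq_trans le_max; rewrite ?leq_addr ?leq_addl.
Qed.

Lemma meval_bscale_bicomp t s x p : meval (bscale t s x) p =
  \sum_(i < bdeg_bound p) \sum_(j < bdeg_bound p)
    t ^+ i * s ^+ j * meval x (bicomp p i j).
Proof.
rewrite meval_bscale (big_bigraded (@bdeg_lt_bound p)).
by apply: eq_bigr => i _; apply: eq_bigr => j _; rewrite meval_bicomp.
Qed.

Lemma meval_bscale_eq0 t s x p :
  (forall d1 d2, meval x (bicomp p d1 d2) = 0) -> meval (bscale t s x) p = 0.
Proof.
move=> comp0; rewrite meval_bscale_bicomp.
by apply: big1 => i _; apply: big1 => j _; rewrite comp0 mulr0.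
Qed.

Lemma exists_bscale_meval_neq0 x p d d1 d2 :
  whomog (ww e) d p -> meval x (bicomp p d1 d2) != 0 ->
  exists2 u, u != 0 & meval (bscale u 1 x) p != 0.
Proof.
move=> hom nz; pose D := bdeg_bound p.
pose Q : {poly k} := \poly_(i < D) \sum_(j < D) meval x (bicomp p i j).
have QE u : Q.[u] = meval (bscale u 1 x) p.
  rewrite meval_bscale_bicomp horner_poly; apply: eq_bigr => i _.
  by rewrite mulr_suml; apply: eq_bigr => j _; rewrite expr1n mulr1 mulrC.
have [lt1 lt2] : (d1 < D)%N /\ (d2 < D)%N.
  have [m] : exists m, m \in msupp p /\ (bdeg1 m == d1) && (bdeg2 m == d2).
    apply: NNPP => none; move: nz; rewrite meval_bicomp big1_seq ?eqxx // => m.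
    by move=> /andP[hd hm]; exfalso; apply: none; exists m.
  by move=> [/bdeg_lt_bound[lt1 lt2] /andP[/eqP <- /eqP <-]].
have d12 : (d1 + d2)%N = d.
  by apply/eqP; apply: contraNT nz => d12; rewrite (bicomp_whomog_eq0 hom d12) meval0.
have Qd1 : Q`_d1 = meval x (bicomp p d1 d2).
  rewrite coef_poly lt1 (bigD1 (Ordinal lt2)) //= big1 ?addr0 // => j ne_j.
  suff d1j : (d1 + j != d)%N by rewrite (bicomp_whomog_eq0 hom d1j) meval0.
  by apply: contra ne_j; rewrite -d12 eqn_add2l => /eqP j_d2; apply/eqP/val_inj.
have Q0 : Q != 0 by apply: contra_neq nz => Q0; rewrite -Qd1 Q0 coef0.
by have [u u0 Qu] := exists_nonroot_neq0 Q0; exists u; rewrite // -QE.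
Qed.

End Bigraded.

Theorem mainTheorem8 (k : closedFieldType) (n : nat) (e : 'I_n.+1 -> nat) :
  (1 <= n)%N ->
  (forall i, (0 < e i)%N) ->
  forall F : {mpoly k[n.+1 + n.+1]} -> Prop,
    (forall p, F p -> exists d, whomog (ww e) d p) ->
  exists G : {mpoly k[n.+1 + n.+1]} -> Prop,
    (forall q, G q -> exists d1 d2, bihomog e d1 d2 q) /\
    forall a b : 'I_n.+1 -> k, nonzero a -> nonzero b ->
      ((exists x : 'I_(n.+1 + n.+1) -> k,
          [/\ inU x, ~ zeroset F x, wequiv e (fstc x) a & wequiv e (sndc x) b])
       <-> ~ zeroset G (catc a b)).
Proof.
move=> _ _ F homF.
exists (fun q => exists2 p, F p & exists d1 d2, q = bicomp e p d1 d2); split.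
  by move=> q [p _ [d1 [d2 ->]]]; exists d1, d2; apply: bicomp_bihomog.
move=> a b [ja ha] [jb hb]; split.
  move=> [x [_ nFx hxa hxb] nG]; apply: nFx => p Fp.
  have [t [s [_ _ hx]]] := wequiv_bscale_catc hxa hxb.
  rewrite (meval_eq p hx); apply: meval_bscale_eq0 => d1 d2.
  by apply: nG; exists p => //; exists d1, d2.
move=> nG.
have [p Fp [d1 [d2 nz]]] : exists2 p, F p &
    exists d1 d2, meval (catc a b) (bicomp e p d1 d2) != 0.
  apply: NNPP => none; apply: nG => _ [p Fp [d1 [d2 ->]]]; apply/eqP.
  by apply: NNPP => nz; apply: none; exists p => //; exists d1, d2; apply/negP.
have [d hom] := homF p Fp.
have [u u0 pu] := exists_bscale_meval_neq0 hom nz.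
exists (bscale e u 1 (catc a b)); split.
- split; [exists ja | exists jb];
    by rewrite ?fstc_bscale ?sndc_bscale ?fstc_catc ?sndc_catc ?expr1n ?mul1r ?mulf_neq0 ?expf_neq0.
- by move=> zF; move: pu; rewrite zF ?eqxx.
- exists u^-1; rewrite ?invr_eq0 // => j.
  by rewrite fstc_bscale fstc_catc exprVn mulKf // expf_neq0.
- by exists 1; rewrite ?oner_neq0 // => j; rewrite sndc_bscale sndc_catc !expr1n !mul1r.
Qed.
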